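(* Let $\Sigma=\{c_1\prec\dots\prec c_\sigma\}$, $n\ge1$, and nonnegative integers $n_c$ ($c\in\Sigma$) with $\sum_c n_c=n-1$ be given, and let $\mathcal U$, $\mathcal M$, $f$ be as in the context. For every matrix $M\in\mathcal M$, its $n$ rotations $M^0,M^1,\dots,M^{n-1}$ are pairwise distinct, and exactly one of them belongs to $f(\mathcal U)$.
   Context: A trie over a finite totally ordered alphabet $\Sigma$ is a rooted ordered tree with edges labeled by symbols of $\Sigma$ such that edges leaving the same node have distinct labels and siblings are ordered by their incoming labels; $out(u)$ denotes the set of labels of edges leaving node $u$. $\mathcal U$ is the set of tries with $n$ nodes over $\Sigma$ in which exactly $n_c$ edges are labeled $c$, for every $c$. $\mathcal M$ is the set of all $\sigma\times n$ binary matrices whose $i$-th row contains exactly $n_{c_i}$ ones, for every $i\in[\sigma]$. The map $f:\mathcal U\to\mathcal M$ sends a trie with nodes $u_1,\dots,u_n$ in pre-order (children visited in increasing label order) to the matrix $M$ with $M[i][j]=1$ iff $c_i\in out(u_j)$. For $M\in\mathcal M$ and integer $r\ge0$, the $r$-th rotation $M^r$ is the matrix whose $j$-th column is the $((j+r-1)\bmod n)+1$-th column of $M$, for every $j\in[n]$. *)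

From mathcomp Require Import all_boot all_algebra.
Set Implicit Arguments. Unset Strict Implicit. Unset Printing Implicit Defensive.

(* Alphabet Sigma = 'I_sigma, with c_1 < ... < c_sigma the order of ordinals
   (c_{i+1} is the ordinal i). *)
Inductive trie (S : Type) : Type := Node of seq (S * trie S).
Arguments Node {S}.

Section Tries.
Variable sigma : nat.
Notation S := ('I_sigma).

Fixpoint wf_trie (t : trie S) : bool :=
  let: Node ch := t in
  sorted (fun a b : S => a < b) (map fst ch) && all (fun p => wf_trie p.2) ch.

Fixpoint preorder_out (t : trie S) : seq (seq S) :=
  let: Node ch := t in
  map fst ch :: flatten (map (fun p => preorder_out p.2) ch).

Fixpoint edge_labels (t : trie S) : seq S :=
  let: Node ch := t in
  flatten (map (fun p => p.1 :: edge_labels p.2) ch).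

Definition num_nodes (t : trie S) : nat := size (preorder_out t).

Definition inU (n : nat) (cnt : S -> nat) (t : trie S) : Prop :=
  wf_trie t /\ num_nodes t = n /\ (forall c : S, count_mem c (edge_labels t) = cnt c).

Definition inM (n : nat) (cnt : S -> nat) (M : 'M[bool]_(sigma, n)) : Prop :=
  forall i : S, #|[pred j : 'I_n | M i j]| = cnt i.

Definition fmx (n : nat) (t : trie S) : 'M[bool]_(sigma, n) :=
  \matrix_(i < sigma, j < n) (i \in nth [::] (preorder_out t) j).

End Tries.

Lemma rot_proof (n : nat) (j : 'I_n) (r : nat) : (j + r) %% n < n.
Proof. apply: ltn_pmod. exact: leq_ltn_trans (leq0n j) (ltn_ord j). Qed.

Definition rotmx (sigma n : nat) (r : nat) (M : 'M[bool]_(sigma, n)) : 'M[bool]_(sigma, n) :=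
  \matrix_(i < sigma, j < n) M i (Ordinal (rot_proof j r)).

From mathcomp Require Import all_boot all_algebra zify.

Set Implicit Arguments.
Unset Strict Implicit.
Unset Printing Implicit Defensive.

(* The columns of f(T) list, in pre-order, the children labels of the nodes of
   T, and a sequence of children lists comes from a tree exactly when it is a
   Lukasiewicz word: before the j-th node more than j nodes have been announced,
   and exactly n - 1 children are listed in total.  The column weights of M sum
   to n - 1, so by the cycle lemma exactly one rotation of the weight sequence
   has this prefix property, namely the one starting at the first minimum of
   the excess "prefix sum minus length".  If two distinct rotations of M
   coincided, shifting that good rotation would yield a second one. *)

Definition good_rotation (N : nat) (d : nat -> nat) (r : nat) : Prop :=
  forall k, k < N -> k <= \sum_(i < k) d ((i + r) %% N).

Section CycleLemma.
Variables (N : nat) (d : nat -> nat).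

Let prefix m := \sum_(i < m) d (i %% N).

Lemma prefix_rot r k : \sum_(i < k) d ((i + r) %% N) + prefix r = prefix (r + k).
Proof.
rewrite /prefix big_split_ord addnC; congr (_ + _).
by apply: eq_bigr => i _; rewrite addnC.
Qed.

Lemma good_rotationE r :
  good_rotation N d r <-> forall k, k < N -> k + prefix r <= prefix (r + k).
Proof. by split=> good k /good; rewrite -prefix_rot; lia. Qed.

Hypothesis sum_d : \sum_(i < N) d i = N.-1.

Lemma prefix_period m : prefix (N + m) = N.-1 + prefix m.
Proof.
rewrite /prefix big_split_ord /= -sum_d; congr (_ + _).
  by apply: eq_bigr => i _; rewrite modn_small.
by apply: eq_bigr => i _; rewrite /= modnDl.
Qed.

Lemma good_rotation_unique r1 r2 :
  r1 < N -> r2 < N -> good_rotation N d r1 -> good_rotation N d r2 -> r1 = r2.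
Proof.
wlog lt12 : r1 r2 / r1 < r2.
  move=> W r1N r2N g1 g2; case: (ltngtP r1 r2) => [lt12|lt21|//]; first exact: W.
  exact/esym/W.
move=> _ r2N /good_rotationE g1 /good_rotationE g2.
have := g1 (r2 - r1) ltac:(lia); have := g2 (N - r2 + r1) ltac:(lia).
rewrite (_ : r2 + (N - r2 + r1) = N + r1) ?prefix_period; last by lia.
by rewrite (_ : r1 + (r2 - r1) = r2); lia.
Qed.

Lemma good_rotation_exists : 0 < N -> exists2 r, r < N & good_rotation N d r.
Proof.
move=> N_gt0.
pose excess j := prefix j + N - j.
(* Minimising [excess j * N + j] selects the first minimum of the excess. *)
have [r _ min_r] := arg_minnP (fun j : 'I_N => excess j * N + j) (isT : predT (Ordinal N_gt0)).
have excess_min (j : 'I_N) : excess r <= excess j /\ (j < r -> excess r < excess j).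
  move: (min_r j isT) (ltn_ord r) (ltn_ord j).
  by move: (excess r) (excess j) => a b; split; nia.
exists r => //; apply/good_rotationE => k ltkN.
case: (ltnP (r + k) N) => [lt_rk | ge_rk].
  by case: (excess_min (Ordinal lt_rk)); rewrite /excess /=; lia.
have lt_r := ltn_ord r; set j := r + k - N.
have lt_j : j < N by lia.
have -> : r + k = N + j by lia.
case: (excess_min (Ordinal lt_j)) => _ /=; move/(_ ltac:(lia)).
by rewrite /excess prefix_period; lia.
Qed.

End CycleLemma.

(* [L] is the pre-order list of children lists of some forest of [k] trees. *)
Definition lukasiewicz (T : Type) (k : nat) (L : seq (seq T)) : Prop :=
  (forall j, j < size L -> j < k + sumn (map size (take j L))) /\
  size L = k + sumn (map size L).

Lemma lukasiewicz_nil (T : Type) k : lukasiewicz k (@nil (seq T)) -> k = 0.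
Proof. by case=> _ /=; lia. Qed.

Lemma lukasiewicz_cons (T : Type) k (s : seq T) L :
  lukasiewicz k (s :: L) <-> 0 < k /\ lukasiewicz (k.-1 + size s) L.
Proof.
split=> [[prefix_ok total] | [k_gt0 [prefix_ok total]]].
  have k_gt0 : 0 < k by have := prefix_ok 0 isT; rewrite take0 /=; lia.
  split=> //; split; last by move: total => /=; lia.
  by move=> j ltjL; have := prefix_ok j.+1; rewrite /= ltnS => /(_ ltjL); lia.
split; last by rewrite /= total; lia.
by case=> [|j] /=; [lia | rewrite ltnS => /prefix_ok; lia].
Qed.

Lemma lukasiewicz1E (T : Type) (L : seq (seq T)) :
  0 < size L -> sumn (map size L) = (size L).-1 ->
  lukasiewicz 1 L <-> forall j, j < size L -> j <= sumn (map size (take j L)).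
Proof.
move=> L_gt0 total; split=> [[prefix_ok _] j /prefix_ok | prefix_ok]; first by lia.
by split; [move=> j /prefix_ok | ]; lia.
Qed.

Lemma sumn_size_take (T : Type) (L : seq (seq T)) k : k <= size L ->
  sumn (map size (take k L)) = \sum_(i < k) size (nth [::] L i).
Proof.
elim: k => [|k IHk] ltkL; first by rewrite take0 big_ord0.
by rewrite (take_nth [::]) // map_rcons sumn_rcons IHk ?(ltnW ltkL) // big_ord_recr.
Qed.

Section Forests.
Variable sigma : nat.
Notation S := 'I_sigma.
Notation ltS := (fun a b : S => a < b).

Definition forest_out (ts : seq (trie S)) : seq (seq S) :=
  flatten (map (@preorder_out sigma) ts).

Lemma forest_out_cons ch ts :
  forest_out (Node ch :: ts) = map fst ch :: forest_out (map snd ch ++ ts).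
Proof. by rewrite /forest_out /= map_cat flatten_cat -map_comp. Qed.

Lemma forest_ind (P : seq (trie S) -> Prop) :
  P [::] -> (forall ch ts, P (map snd ch ++ ts) -> P (Node ch :: ts)) -> forall ts, P ts.
Proof.
move=> P0 P_cons ts; have [m] := ubnP (size (forest_out ts)).
elim: m ts => [|m IHm] [|[ch] ts] //; rewrite forest_out_cons ltnS => size_ts.
exact/P_cons/IHm.
Qed.

Lemma lukasiewicz_forest_out ts : lukasiewicz (size ts) (forest_out ts).
Proof.
elim/forest_ind: ts => [|ch ts IH]; first by split.
rewrite forest_out_cons; apply/lukasiewicz_cons; split=> //=.
by rewrite size_map; rewrite size_cat size_map addnC in IH.
Qed.

Lemma sorted_forest_out ts : all (@wf_trie sigma) ts -> all (sorted ltS) (forest_out ts).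
Proof.
elim/forest_ind: ts => [|ch ts IH] //.
rewrite forest_out_cons /= => /andP[/andP[sorted_ch wf_ch] wf_ts].
by rewrite sorted_ch IH // all_cat wf_ts andbT all_map.
Qed.

Lemma count_edge_labels_node c (ch : seq (S * trie S)) :
  count_mem c (edge_labels (Node ch)) =
  count_mem c (map fst ch) + count_mem c (flatten (map (@edge_labels sigma) (map snd ch))).
Proof. by elim: ch => //= p ch IH; rewrite !count_cat /= IH; lia. Qed.

Lemma count_edge_labels c ts :
  count_mem c (flatten (map (@edge_labels sigma) ts)) = count_mem c (flatten (forest_out ts)).
Proof.
elim/forest_ind: ts => [|ch ts IH] //.
rewrite forest_out_cons /= !count_cat count_edge_labels_node -IH.
by rewrite map_cat flatten_cat count_cat addnA.
Qed.

Lemma lukasiewicz_forest k L : lukasiewicz k L -> all (sorted ltS) L ->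
  exists ts, [/\ size ts = k, all (@wf_trie sigma) ts & forest_out ts = L].
Proof.
elim: L k => [|s L IHL] k; first by move=> /lukasiewicz_nil -> _; exists [::].
move=> /lukasiewicz_cons[k_gt0 luk_L] /= /andP[sorted_s sorted_L].
have [ts [size_ts wf_ts out_ts]] := IHL _ luk_L sorted_L.
have size_take : size (take (size s) ts) = size s by rewrite size_takel // size_ts; lia.
pose ch := zip s (take (size s) ts).
have fst_ch : map fst ch = s by apply: unzip1_zip; rewrite size_take.
have snd_ch : map snd ch = take (size s) ts by apply: unzip2_zip; rewrite size_take.
exists (Node ch :: drop (size s) ts); split.
- by rewrite /= size_drop size_ts; lia.
- move: wf_ts; rewrite -{1}(cat_take_drop (size s) ts) all_cat -snd_ch all_map.
  by move=> /andP[wf_ch wf_drop]; rewrite /= fst_ch sorted_s wf_ch wf_drop.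
- by rewrite forest_out_cons fst_ch snd_ch cat_take_drop out_ts.
Qed.

End Forests.

Lemma sorted_enum_ord n : sorted (fun a b : 'I_n => a < b) (enum 'I_n).
Proof. by have := iota_ltn_sorted 0 n; rewrite -val_enum_ord sorted_map. Qed.

Lemma sum_bool_card (T : finType) (P : pred T) : \sum_(x : T) P x = #|P|.
Proof.
apply/esym; rewrite -sum1_card big_mkcond; apply: eq_bigr => x _.
by rewrite unfold_in; case: (P x).
Qed.

Section Columns.
Variables sigma N : nat.
Implicit Type A : 'M[bool]_(sigma, N).

Definition mx_columns A : seq (seq 'I_sigma) :=
  [seq [seq c <- enum 'I_sigma | A c j] | j <- enum 'I_N].

Lemma size_mx_columns A : size (mx_columns A) = N.
Proof. by rewrite size_map size_enum_ord. Qed.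

Lemma nth_mx_columns A (j : 'I_N) :
  nth [::] (mx_columns A) j = [seq c <- enum 'I_sigma | A c j].
Proof. by rewrite (nth_map j) ?size_enum_ord // nth_ord_enum. Qed.

Lemma sorted_mx_columns A : all (sorted (fun a b : 'I_sigma => a < b)) (mx_columns A).
Proof.
rewrite all_map; apply/allP => j _ /=.
by apply: sorted_filter; [exact: ltn_trans | exact: sorted_enum_ord].
Qed.

Lemma size_nth_mx_columns A (j : 'I_N) :
  size (nth [::] (mx_columns A) j) = \sum_c A c j.
Proof. by rewrite nth_mx_columns size_filter -sumn_count sumnE big_map big_enum. Qed.

Lemma count_mx_columns A c : count_mem c (flatten (mx_columns A)) = \sum_j A c j.
Proof.
rewrite count_flatten -map_comp sumnE big_map big_enum; apply: eq_bigr => j _ /=.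
rewrite count_uniq_mem; first by rewrite mem_filter mem_enum andbT.
by rewrite filter_uniq // enum_uniq.
Qed.

Lemma sumn_size_mx_columns A : sumn (map size (mx_columns A)) = \sum_c \sum_j A c j.
Proof.
rewrite exchange_big -map_comp sumnE big_map big_enum /=; apply: eq_bigr => j _.
by rewrite -size_nth_mx_columns nth_mx_columns.
Qed.

Lemma inME cnt A : inM cnt A <-> forall c, \sum_j A c j = cnt c.
Proof. by split=> rows c; rewrite -rows sum_bool_card. Qed.

Lemma preorder_out_fmx (t : trie 'I_sigma) : wf_trie t -> num_nodes t = N ->
  preorder_out t = mx_columns (fmx N t).
Proof.
move=> wf_t; rewrite /num_nodes => size_t.
apply: (eq_from_nth (x0 := [::])); first by rewrite size_mx_columns.
move=> j; rewrite size_t => ltjN; rewrite (nth_mx_columns _ (Ordinal ltjN)) /=.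
apply: (irr_sorted_eq (leT := fun a b : 'I_sigma => a < b)).
- by move=> ? ? ?; exact: ltn_trans.
- by move=> ?; exact: ltnn.
- have := sorted_forest_out (ts := [:: t]); rewrite /forest_out /= cats0 andbT => /(_ wf_t).
  by move/allP; apply; rewrite mem_nth // size_t.
- by apply: sorted_filter; [exact: ltn_trans | exact: sorted_enum_ord].
- by move=> c; rewrite mem_filter mem_enum andbT mxE.
Qed.

Lemma fmx_mx_columns (t : trie 'I_sigma) A : preorder_out t = mx_columns A -> fmx N t = A.
Proof.
move=> out_t; apply/matrixP => c j.
by rewrite mxE out_t nth_mx_columns mem_filter mem_enum andbT.
Qed.

Lemma fmx_image cnt A : inM cnt A ->
  (exists t, inU N cnt t /\ fmx N t = A) <-> lukasiewicz 1 (mx_columns A).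
Proof.
move=> /inME rows; split.
  move=> [t [[wf_t [size_t _]] <-]]; rewrite -preorder_out_fmx //.
  by have := lukasiewicz_forest_out [:: t]; rewrite /forest_out /= cats0.
move=> /lukasiewicz_forest /(_ (sorted_mx_columns A)) [ts [size_ts wf_ts out_ts]].
case: ts size_ts wf_ts out_ts => [|t [|//]] // _.
rewrite /= andbT /forest_out /= cats0 => wf_t out_t.
exists t; split; last exact: fmx_mx_columns.
split=> //; split; first by rewrite /num_nodes out_t size_mx_columns.
move=> c; have := count_edge_labels c [:: t]; rewrite /forest_out /= !cats0 => ->.
by rewrite out_t count_mx_columns.
Qed.

End Columns.

Section Rotations.
Variables sigma n : nat.
Implicit Type M : 'M[bool]_(sigma, n).

Lemma rot_ord_inj r : injective (fun j : 'I_n => Ordinal (rot_proof j r)).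
Proof.
move=> j1 j2 /(congr1 val) /= /eqP; rewrite eqn_modDr !modn_small // => /eqP.
exact: val_inj.
Qed.

Lemma rotmx_comp M a b : rotmx a (rotmx b M) = rotmx ((b + a) %% n) M.
Proof.
apply/matrixP => c j; rewrite !mxE; congr (M c _); apply: val_inj => /=.
by rewrite modnDml modnDmr (addnC b) addnA.
Qed.

Lemma inM_rotmx cnt M r : inM cnt M -> inM cnt (rotmx r M).
Proof.
move=> /inME rows; apply/inME => c; rewrite -rows [RHS](reindex_inj (@rot_ord_inj r)).
by apply: eq_bigr => j _; rewrite mxE.
Qed.

Lemma nth_mx_columns_rotmx M r i : i < n ->
  nth [::] (mx_columns (rotmx r M)) i = nth [::] (mx_columns M) ((i + r) %% n).
Proof.
move=> ltin; rewrite (nth_mx_columns _ (Ordinal ltin)).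
rewrite (nth_mx_columns _ (Ordinal (rot_proof (Ordinal ltin) r))).
by apply: eq_filter => c; rewrite mxE.
Qed.

Lemma lukasiewicz_rotmx cnt M r : 0 < n -> \sum_c cnt c = n.-1 -> inM cnt M ->
  lukasiewicz 1 (mx_columns (rotmx r M)) <->
  good_rotation n (fun i => size (nth [::] (mx_columns M) i)) r.
Proof.
move=> n_gt0 sum_cnt /(inM_rotmx r) /inME rows.
have size_cols := size_mx_columns (rotmx r M).
rewrite lukasiewicz1E ?size_cols //; last first.
  by rewrite sumn_size_mx_columns -sum_cnt; apply: eq_bigr.
have prefix_cols k : k <= n -> sumn (map size (take k (mx_columns (rotmx r M)))) =
    \sum_(i < k) size (nth [::] (mx_columns M) ((i + r) %% n)).
  move=> lekn; rewrite sumn_size_take ?size_cols //; apply: eq_bigr => i _.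
  by rewrite nth_mx_columns_rotmx // (leq_trans (ltn_ord i) lekn).
by split=> prefix_ok k ltkn; have := prefix_ok k ltkn; rewrite prefix_cols ?(ltnW ltkn).
Qed.

Lemma rotmx_distinct (P : 'M[bool]_(sigma, n) -> Prop) M :
  (exists! r : 'I_n, P (rotmx r M)) ->
  forall r1 r2 : 'I_n, r1 != r2 -> rotmx r1 M != rotmx r2 M.
Proof.
move=> [r [P_r unique_r]] r1 r2 ne_r12; apply/eqP => eq_r12.
pose a := r + n - r1.
have r1_a : (r1 + a) %% n = r.
  by rewrite /a (_ : r1 + _ = r + n); [rewrite modnDr modn_small | have := ltn_ord r1; lia].
have /unique_r /(congr1 val) /= : P (rotmx (Ordinal (rot_proof r2 a)) M).
  by rewrite -rotmx_comp -eq_r12 rotmx_comp r1_a.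
rewrite -{1}r1_a => /eqP; rewrite eqn_modDr !modn_small // => /eqP /val_inj.
exact/eqP.
Qed.

End Rotations.

Theorem corollary1 (sigma n : nat) (cnt : 'I_sigma -> nat) :
  0 < n ->
  \sum_(c < sigma) cnt c = n.-1 ->
  forall M : 'M[bool]_(sigma, n), inM cnt M ->
    (forall r1 r2 : 'I_n, r1 != r2 -> rotmx r1 M != rotmx r2 M) /\
    (exists! r : 'I_n, exists t : trie 'I_sigma, inU n cnt t /\ fmx n t = rotmx r M).
Proof.
move=> n_gt0 sum_cnt M inM_M.
pose d i := size (nth [::] (mx_columns M) i).
have sum_d : \sum_(i < n) d i = n.-1.
  rewrite /d -sumn_size_take ?size_mx_columns // take_oversize ?size_mx_columns //.
  by have /inME rows := inM_M; rewrite sumn_size_mx_columns -sum_cnt; apply: eq_bigr.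
pose in_image A := exists t, inU n cnt t /\ fmx n t = A.
have image_rot (r : 'I_n) : in_image (rotmx r M) <-> good_rotation n d r.
  exact: iff_trans (fmx_image (inM_rotmx r inM_M)) (lukasiewicz_rotmx r n_gt0 sum_cnt inM_M).
have [r0 lt_r0n good_r0] := good_rotation_exists sum_d n_gt0.
have unique_rot : exists! r : 'I_n, in_image (rotmx r M).
  exists (Ordinal lt_r0n); split=> [|r /image_rot good_r]; first exact/image_rot.
  exact/val_inj/(good_rotation_unique sum_d lt_r0n (ltn_ord r) good_r0 good_r).
by split; [exact: (rotmx_distinct (P := in_image)) | exact: unique_rot].
Qed.
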